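(* Let $N\geq 1$ and let $f\in C^1(\mathbb{R})$ satisfy $f(0)=0$ and suppose there exists $\delta>0$ such that $f'(s)\leq 0$ for all $|s|<\delta$. Let $u_1,u_2\in C^2(\mathbb{R}^N)$ be two distinct classical solutions of $$\Delta u+f(u)=0\quad\text{in }\mathbb{R}^N,\qquad u(x)\to 0\ \text{as }|x|\to\infty,$$ with $u_1\not\equiv 0$ and $u_2\not\equiv 0$, and assume that at least one of $u_1,u_2$ changes sign in $\mathbb{R}^N$. Then $u_1-u_2$ changes sign, i.e. there exist $x,y\in\mathbb{R}^N$ with $u_1(x)-u_2(x)>0$ and $u_1(y)-u_2(y)<0$. *)

From HB Require Import structures.
From mathcomp Require Import all_boot all_order all_algebra.
From mathcomp Require Import all_classical all_reals all_analysis.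
Set Implicit Arguments. Unset Strict Implicit. Unset Printing Implicit Defensive.
Import Order.TTheory GRing.Theory Num.Theory.
Import numFieldNormedType.Exports.
Local Open Scope ring_scope.

Definition basis_vec {R : realType} {N : nat} (i : 'I_N) : 'rV[R]_N :=
  delta_mx 0 i.

Definition partial {R : realType} {N : nat} (i : 'I_N)
  (u : 'rV[R]_N -> R) : 'rV[R]_N -> R :=
  fun x => 'D_(basis_vec i) u x.

Definition laplacian {R : realType} {N : nat} (u : 'rV[R]_N -> R) :
  'rV[R]_N -> R :=
  fun x => \sum_(i < N) partial i (partial i u) x.

Definition C2 {R : realType} {N : nat} (u : 'rV[R]_N -> R) : Prop :=
  (forall x, differentiable u x) /\
  (forall (i : 'I_N) x, differentiable (partial i u) x) /\
  (forall (i j : 'I_N), continuous (partial j (partial i u))).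

Definition C1 {R : realType} (f : R -> R) : Prop :=
  (forall s, derivable f s 1) /\ continuous (derive1 f).

Definition vanishes_at_infinity {R : realType} {N : nat}
  (u : 'rV[R]_N -> R) : Prop :=
  forall eps : R, 0 < eps ->
    exists M : R, forall x : 'rV[R]_N, M < `|x| -> `|u x| < eps.

Definition is_solution {R : realType} {N : nat} (f : R -> R)
  (u : 'rV[R]_N -> R) : Prop :=
  C2 u /\ (forall x, laplacian u x + f (u x) = 0) /\ vanishes_at_infinity u.

Definition changes_sign {R : realType} {N : nat} (u : 'rV[R]_N -> R) : Prop :=
  exists x y : 'rV[R]_N, 0 < u x /\ u y < 0.

From HB Require Import structures.
From mathcomp Require Import all_boot all_order all_algebra.
From mathcomp Require Import all_classical all_reals all_analysis.
From mathcomp Require Import ring lra.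
Set Implicit Arguments. Unset Strict Implicit. Unset Printing Implicit Defensive.
Import Order.TTheory GRing.Theory Num.Theory.
Import numFieldNormedType.Exports.
Local Open Scope ring_scope.
Local Open Scope classical_set_scope.

(* Sliding method.  If u1 - u2 does not change sign, the two solutions are
   ordered, W <= U with U <> W.  Translate U along a unit vector d and let ts be
   the infimum of the shifts t >= 0 for which U (t d + .) drops somewhere below W.
   If there is no such shift, letting t -> oo in W (x) <= U (t d + x) gives
   W <= 0 <= U.  Otherwise v := U (ts d + .) - W is nonnegative and Delta v <= L v,
   f being Lipschitz on the bounded ranges of the solutions.  By the strong minimum
   principle (Hopf's lemma with an explicit barrier) either v = 0, so that W is a
   nontrivial translate of U and iterating W <= U forces U, W >= 0, or v > 0; the
   latter contradicts the choice of ts because slightly larger shifts still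
   dominate W (see [not_strictly_above_at_inf_crossing]).  In all cases U >= 0 and
   W has a constant sign, so neither solution changes sign. *)

Section RealCalculus.
Context {R : realType}.

Lemma between_min (a b : R) : 0 < a -> 0 < b ->
  exists h : R, [/\ 0 < h, h < a & h < b].
Proof.
move=> a0 b0; have m0 : 0 < Num.min a b by rewrite lt_min a0 b0.
exists (Num.min a b / 2); rewrite divr_gt0 //.
have : Num.min a b / 2 < Num.min a b by rewrite ltr_pdivrMr // ltr_pMr // ltr1n.
by rewrite lt_min => /andP[].
Qed.

Lemma derivable_MVT (g : R -> R) (a b : R) : a < b ->
  (forall t, derivable g t 1) ->
  exists2 c, a < c < b & g b - g a = derive1 g c * (b - a).
Proof.
move=> ab dg.
have dd x : x \in `]a, b[%R -> is_derive x 1 g (derive1 g x).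
  by move=> _; rewrite derive1E; apply: derivableP.
have cg : {within `[a, b], continuous g}.
  by apply: continuous_subspaceT => x; apply/differentiable_continuous/derivable1_diffP.
by have [c] := MVT ab dd cg; rewrite in_itv; exists c.
Qed.

Lemma derivable_MVT_segment (g : R -> R) (a b : R) : a <= b ->
  (forall t, derivable g t 1) ->
  exists2 c, a <= c <= b & g b - g a = derive1 g c * (b - a).
Proof.
move=> ab dg.
have dd x : x \in `]a, b[%R -> is_derive x 1 g (derive1 g x).
  by move=> _; rewrite derive1E; apply: derivableP.
have cg : {within `[a, b], continuous g}.
  by apply: continuous_subspaceT => x; apply/differentiable_continuous/derivable1_diffP.
by have [c] := MVT_segment ab dd cg; rewrite in_itv; exists c.
Qed.

Lemma near0'_ball (P : R -> Prop) : (\forall t \near 0^', P t) ->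
  exists2 e : R, 0 < e & forall t, `|t| < e -> t != 0 -> P t.
Proof.
move=> /nbhs_ballP[e e0 He]; exists e => // t te.
by apply: He; rewrite /ball /= sub0r normrN.
Qed.

Lemma derive1_lt0_right (g : R -> R) : derivable g 0 1 -> derive1 g 0 < 0 ->
  exists2 e : R, 0 < e & forall t, 0 < t -> t < e -> g t < g 0.
Proof.
move=> dg; rewrite derive1E => neg.
pose q h := h^-1 *: ((g \o shift 0) (h *: 1) - g 0).
have cv : q @ 0^' --> 'D_1 g 0 := dg.
have [e e0 He] := near0'_ball (cvgr_lt _ cv 0 neg).
exists e => // t t0 te; have := He t _ (lt0r_neq0 t0).
rewrite gtr0_norm // => /(_ te).
by rewrite /q /comp /= addr0 /GRing.scale /= mulr1 pmulr_rlt0 ?invr_gt0 // subr_lt0.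
Qed.

Lemma right_min_derive1_ge0 (g : R -> R) (tau : R) : derivable g 0 1 ->
  0 < tau -> (forall t, 0 < t -> t < tau -> g 0 <= g t) -> 0 <= derive1 g 0.
Proof.
move=> dg tau0 gmin; rewrite leNgt; apply/negP => /(derive1_lt0_right dg)[e e0 He].
have [h [h0 he ht]] := between_min e0 tau0.
by have := He h h0 he; rewrite ltNge gmin.
Qed.

Lemma local_min_derive1_eq0 (g : R -> R) (r : R) : 0 < r ->
  (forall t, derivable g t 1) -> (forall t, `|t| < r -> g 0 <= g t) ->
  derive1 g 0 = 0.
Proof.
move=> r0 dg gmin; rewrite derive1E.
apply: (@derive_val _ _ _ _ _ _ _ (@derive1_at_min R g (- r) r 0 _ _ _ _)).
- by rewrite -subr_ge0 opprK ltW // addr_gt0.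
- by move=> t _; exact: dg.
- by rewrite in_itv /= oppr_lt0 r0.
- by move=> t; rewrite in_itv /= => /andP[h1 h2]; apply: gmin; rewrite ltr_norml h1.
Qed.

Lemma local_min_derive2_ge0 (g : R -> R) (r : R) : 0 < r ->
  (forall t, derivable g t 1) -> derivable (derive1 g) 0 1 ->
  (forall t, `|t| < r -> g 0 <= g t) -> 0 <= derive1 (derive1 g) 0.
Proof.
move=> r0 dg ddg gmin; have g'0 := local_min_derive1_eq0 r0 dg gmin.
rewrite leNgt; apply/negP => /(derive1_lt0_right ddg)[e e0]; rewrite g'0 => He.
have [h [h0 he hr]] := between_min e0 r0.
have [c /andP[c0 ch] eq] := derivable_MVT h0 dg.
have : g h - g 0 < 0 by rewrite eq subr0 pmulr_llt0 // He // (lt_trans ch).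
by rewrite subr_lt0 ltNge gmin // gtr0_norm.
Qed.

Lemma derive1_le0_nonincreasing (f : R -> R) (de : R) :
  (forall s, derivable f s 1) -> (forall s, `|s| < de -> derive1 f s <= 0) ->
  forall a b, `|a| < de -> `|b| < de -> a <= b -> f b <= f a.
Proof.
move=> df fneg a b ha hb ab.
have [c /andP[ac cb] eq] := derivable_MVT_segment ab df.
have hc : `|c| < de.
  move: ha hb; rewrite !ltr_norml => /andP[a1 _] /andP[_ b2].
  by rewrite (lt_le_trans a1 ac) (le_lt_trans cb b2).
by rewrite -subr_le0 eq mulr_le0_ge0 // ?fneg // subr_ge0.
Qed.

Lemma C1_lipschitz_bounded (f : R -> R) (M : R) : C1 f ->
  exists2 L : R, 0 < L &
    forall a b, `|a| <= M -> `|b| <= M -> `|f a - f b| <= L * `|a - b|.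
Proof.
move=> [df cdf]; have [M0|M0] := ltrP M 0.
  by exists 1 => // a b ha; have := normr_ge0 a; rewrite leNgt (le_lt_trans ha M0).
have MM : - M <= M by rewrite -subr_ge0 opprK -mulr2n mulrn_wge0.
have cabs : {within `[- M, M], continuous (fun s => `|derive1 f s|)}.
  apply: continuous_subspaceT => x.
  exact: continuous_comp (cdf x) (@norm_continuous R R^o _).
have [c _ cmax] := EVT_max MM cabs.
exists (`|derive1 f c| + 1); first by rewrite ltr_wpDl.
suff lip_le : forall a b, `|a| <= M -> `|b| <= M -> a <= b ->
    `|f a - f b| <= (`|derive1 f c| + 1) * `|a - b|.
  move=> a b ha hb; have [ab|ba] := leP a b; first exact: lip_le.
  by rewrite distrC (distrC a); apply: lip_le => //; apply: ltW.
move=> a b ha hb ab; have [e /andP[ae eb] eq] := derivable_MVT_segment ab df.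
have he : `|derive1 f e| <= `|derive1 f c|.
  apply: cmax; rewrite in_itv /=; move: ha hb.
  by rewrite !ler_norml => /andP[a1 _] /andP[_ b2]; rewrite (le_trans a1 ae) (le_trans eb b2).
rewrite distrC eq normrM (distrC b); apply: ler_pM => //.
by apply: le_trans he _; rewrite lerDl.
Qed.

End RealCalculus.

Section Lines.
Context {R : realType} {V : normedModType R}.

Definition line (u : V -> R) (x w : V) (t : R) := u (t *: w + x).

Lemma line0 u x w : line u x w 0 = u x.
Proof. by rewrite /line scale0r add0r. Qed.

Let line_quotient u x w t :
  (fun h : R => h^-1 *: (line u x w (h + t) - line u x w t)) =
  (fun h : R => h^-1 *: ((u \o shift (t *: w + x)) (h *: w) - u (t *: w + x))).
Proof. by apply: funext => h /=; rewrite /line scalerDl addrA. Qed.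

Lemma derive1_line u x w t : derive1 (line u x w) t = 'D_w u (t *: w + x).
Proof. by rewrite /derive1 line_quotient. Qed.

Lemma derive1_lineE u x w : derive1 (line u x w) = line (fun y => 'D_w u y) x w.
Proof. by apply: funext => t; rewrite derive1_line. Qed.

Lemma derivable_line u x w t :
  derivable (line u x w) t 1 <-> derivable u (t *: w + x) w.
Proof.
rewrite /derivable -line_quotient.
suff -> : (fun h : R => h^-1 *: ((line u x w \o shift t) (h *: 1) - line u x w t)) =
  (fun h : R => h^-1 *: (line u x w (h + t) - line u x w t)) by [].
by apply: funext => h /=; rewrite [h *: 1]mulr1.
Qed.

Lemma derive_line_eq u x w (g : R -> R) : line u x w = g -> 'D_w u x = derive1 g 0.
Proof. by move=> <-; rewrite derive1_line scale0r add0r. Qed.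

Lemma derivable_line_eq u x w (g : R -> R) :
  line u x w = g -> derivable g 0 1 -> derivable u x w.
Proof. by move=> <- /derivable_line; rewrite scale0r add0r. Qed.

Lemma is_derive_line u x w (g : R -> R) (l : R) :
  line u x w = g -> is_derive (0 : R) 1 g l -> is_derive x w u l.
Proof.
move=> ug [dg <-]; split; first exact: derivable_line_eq ug dg.
by rewrite (derive_line_eq ug) derive1E.
Qed.

End Lines.

Section Laplacian.
Context {R : realType} {N : nat}.
Notation V := 'rV[R]_N.

Lemma mx_entry_le_norm (x : V) j : `|x 0 j| <= `|x|.
Proof.
by rewrite [leRHS]/Num.norm /= mx_normrE; apply/bigmax_geP; right; exists (0, j).
Qed.

Lemma norm_basis_vec (i : 'I_N) : `|basis_vec i : V| = 1.
Proof.
apply/eqP; rewrite eq_le; apply/andP; split.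
  rewrite [leLHS]/Num.norm /= mx_normrE; apply/bigmax_leP; split => // -[a b] _ /=.
  by rewrite /basis_vec mxE; case: (_ && _); rewrite ?normr1 ?normr0.
by have := mx_entry_le_norm (basis_vec i : V) i; rewrite /basis_vec mxE !eqxx normr1.
Qed.

Lemma laplacian_line (u : V -> R) (x : V) :
  laplacian u x = \sum_(i < N) derive1 (derive1 (line u x (basis_vec i))) 0.
Proof. by apply: eq_bigr => i _; rewrite derive1_lineE derive1_line scale0r add0r. Qed.

(* Just enough regularity to compute the Laplacian along coordinate lines. *)
Definition pure2_derivable (u : V -> R) :=
  (forall x w, derivable u x w) /\
  (forall i x, derivable (partial i u) x (basis_vec i)).

Lemma pure2_derivable_line (u : V -> R) (x w : V) (t : R) :
  pure2_derivable u -> derivable (line u x w) t 1.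
Proof. by move=> [du _]; apply/derivable_line. Qed.

Lemma laplacian_ge0_at_min (u : V -> R) (x : V) (r : R) : pure2_derivable u -> 0 < r ->
  (forall y, `|y - x| < r -> u x <= u y) -> 0 <= laplacian u x.
Proof.
move=> [du du2] r0 umin; rewrite laplacian_line; apply: sumr_ge0 => i _.
apply: (local_min_derive2_ge0 r0).
- by move=> t; apply/derivable_line.
- by rewrite derive1_lineE; apply/derivable_line; apply: du2.
- move=> t tr; rewrite line0; apply: umin.
  by rewrite addrK normrZ norm_basis_vec mulr1.
Qed.

Section Difference.
Variable b : R.

Lemma derive_subZ (u w : V -> R) x v : derivable u x v -> derivable w x v ->
  'D_v (fun y => u y - b * w y) x = 'D_v u x - b * 'D_v w x.
Proof.
move=> du dw; rewrite (_ : (fun y => _) = u - b \*: w) //.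
by rewrite deriveB ?deriveZ //; exact: derivableZ.
Qed.

Lemma derivable_subZ (u w : V -> R) x v : derivable u x v -> derivable w x v ->
  derivable (fun y => u y - b * w y) x v.
Proof.
move=> du dw; rewrite (_ : (fun y => _) = u - b \*: w) //.
by apply: derivableB => //; apply: derivableZ.
Qed.

Variables (u w : V -> R).
Hypotheses (du : pure2_derivable u) (dw : pure2_derivable w).

Lemma partial_subZ i : partial i (fun y => u y - b * w y) =
  (fun y => partial i u y - b * partial i w y).
Proof.
case: du dw => du1 _ [dw1 _]; apply: funext => y.
by rewrite /partial derive_subZ.
Qed.

Lemma pure2_derivable_subZ : pure2_derivable (fun y => u y - b * w y).
Proof.
have [du1 du2] := du; have [dw1 dw2] := dw.
split=> [x v|i x]; first exact: derivable_subZ.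
by rewrite partial_subZ; apply: derivable_subZ.
Qed.

Lemma laplacian_subZ x :
  laplacian (fun y => u y - b * w y) x = laplacian u x - b * laplacian w x.
Proof.
have [_ du2] := du; have [_ dw2] := dw.
rewrite /laplacian mulr_sumr -sumrB; apply: eq_bigr => i _.
by rewrite partial_subZ; exact: derive_subZ (du2 i x) (dw2 i x).
Qed.

End Difference.

Let sub1E (u w : V -> R) : (fun y => u y - w y) = (fun y => u y - 1 * w y).
Proof. by apply: funext => y; rewrite mul1r. Qed.

Lemma pure2_derivable_sub (u w : V -> R) : pure2_derivable u -> pure2_derivable w ->
  pure2_derivable (fun y => u y - w y).
Proof. by rewrite sub1E; exact: pure2_derivable_subZ. Qed.

Lemma laplacian_sub (u w : V -> R) x : pure2_derivable u -> pure2_derivable w ->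
  laplacian (fun y => u y - w y) x = laplacian u x - laplacian w x.
Proof. by move=> du dw; rewrite sub1E laplacian_subZ // mul1r. Qed.

Section Translation.
Variable c : V.

Let translate_quotient (u : V -> R) x v :
  (fun h : R => h^-1 *: (((fun y => u (c + y)) \o shift x) (h *: v) - u (c + x))) =
  (fun h : R => h^-1 *: ((u \o shift (c + x)) (h *: v) - u (c + x))).
Proof. by apply: funext => h /=; rewrite addrCA. Qed.

Lemma derive_translate (u : V -> R) x v :
  'D_v (fun y => u (c + y)) x = 'D_v u (c + x).
Proof. by rewrite /derive translate_quotient. Qed.

Lemma derivable_translate (u : V -> R) x v :
  derivable (fun y => u (c + y)) x v <-> derivable u (c + x) v.
Proof. by rewrite /derivable translate_quotient. Qed.

Lemma partial_translate (u : V -> R) i :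
  partial i (fun y => u (c + y)) = (fun y => partial i u (c + y)).
Proof. by apply: funext => y; rewrite /partial derive_translate. Qed.

Lemma pure2_derivable_translate (u : V -> R) :
  pure2_derivable u -> pure2_derivable (fun y => u (c + y)).
Proof.
move=> [du du2]; split=> [x v|i x]; first exact/derivable_translate.
by rewrite partial_translate; apply/(derivable_translate (partial i u)).
Qed.

Lemma laplacian_translate (u : V -> R) x :
  laplacian (fun y => u (c + y)) x = laplacian u (c + x).
Proof.
apply: eq_bigr => i _; rewrite partial_translate.
exact: (derive_translate (partial i u)).
Qed.

End Translation.

Section Solutions.
Variables (f : R -> R) (u : V -> R).
Hypothesis (hu : is_solution f u).

Lemma solution_pure2_derivable : pure2_derivable u.
Proof.
by case: hu => -[d1 [d2 _]] _; split=> *; apply: diff_derivable; [exact: d1 | exact: d2].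
Qed.

Lemma solution_laplacian x : laplacian u x = - f (u x).
Proof. by case: hu => _ [h _]; apply/eqP; rewrite -subr_eq0 opprK h. Qed.

Lemma solution_continuous : continuous u.
Proof. by case: hu => -[d1 _] _ x; apply: differentiable_continuous. Qed.

Lemma solution_partial_continuous i : continuous (partial i u).
Proof. by case: hu => -[_ [d2 _]] _ x; apply: differentiable_continuous. Qed.

End Solutions.

End Laplacian.

Section SquaredDistance.
Context {R : realType} {N : nat}.
Notation V := 'rV[R]_N.

Definition sqnorm (w : V) : R := \sum_(j < N) w 0 j ^+ 2.
Definition sqdist (y x : V) : R := \sum_(j < N) (x 0 j - y 0 j) ^+ 2.
Definition sqdist_deriv (y x w : V) : R := 2 * \sum_(j < N) w 0 j * (x 0 j - y 0 j).

Lemma sqdist_ge0 (y x : V) : 0 <= sqdist y x.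
Proof. by apply: sumr_ge0 => *; apply: sqr_ge0. Qed.

Lemma sqdistxx (y : V) : sqdist y y = 0.
Proof. by rewrite /sqdist big1 // => j _; rewrite subrr expr0n. Qed.

Lemma sqdist_eq0 (y x : V) : sqdist y x = 0 -> x = y.
Proof.
move=> h; apply/matrixP => a j; rewrite ord1; apply/eqP; rewrite -subr_eq0 -sqrf_eq0.
rewrite eq_le sqr_ge0 andbT -h /sqdist (bigD1 j) //= lerDl.
by apply: sumr_ge0 => *; apply: sqr_ge0.
Qed.

Lemma sqnormB (y p : V) : sqnorm (y - p) = sqdist y p.
Proof. by apply: eq_bigr => j _; rewrite !mxE -sqrrN opprB. Qed.

Lemma sqdist_derivB (y p : V) : sqdist_deriv y p (y - p) = - (2 * sqdist y p).
Proof.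
rewrite /sqdist_deriv /sqdist -mulrN -sumrN; congr (_ * _).
by apply: eq_bigr => j _; rewrite !mxE expr2; ring.
Qed.

Lemma sqdist_line (y x w : V) (t : R) :
  sqdist y (t *: w + x) = sqnorm w * t ^+ 2 + sqdist_deriv y x w * t + sqdist y x.
Proof.
rewrite /sqdist /sqnorm /sqdist_deriv.
rewrite (eq_bigr (fun j => w 0 j ^+ 2 * t ^+ 2 + 2 * (w 0 j * (x 0 j - y 0 j)) * t
   + (x 0 j - y 0 j) ^+ 2)); last by move=> j _; rewrite !mxE; ring.
by rewrite !big_split /= -!mulr_suml -mulr_sumr.
Qed.

Lemma sum_basis_vec (c : 'I_N -> R) i : \sum_(j < N) (basis_vec i : V) 0 j * c j = c i.
Proof.
rewrite (bigD1 i) //= big1 ?addr0; first by rewrite /basis_vec mxE !eqxx mul1r.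
by move=> j ji; rewrite /basis_vec mxE eqxx /= (negbTE ji) mul0r.
Qed.

Lemma sqdist_deriv_basis (y x : V) i : sqdist_deriv y x (basis_vec i) = 2 * (x 0 i - y 0 i).
Proof. by rewrite /sqdist_deriv sum_basis_vec. Qed.

Lemma sqnorm_basis i : sqnorm (basis_vec i : V) = 1.
Proof.
rewrite /sqnorm (eq_bigr (fun j => (basis_vec i : V) 0 j * 1)) ?sum_basis_vec // => j _.
by rewrite mulr1 expr2 /basis_vec mxE; case: (_ && _); rewrite ?mulr1 ?mulr0.
Qed.

Lemma line_basis_entry (t : R) (x : V) i : (t *: basis_vec i + x) 0 i = t + x 0 i.
Proof.
have -> : (t *: basis_vec i + x) 0 i = t * (basis_vec i : V) 0 i + x 0 i by rewrite !mxE.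
by rewrite /basis_vec mxE !eqxx mulr1.
Qed.

Lemma is_derive_sqdist (y x w : V) : is_derive x w (sqdist y) (sqdist_deriv y x w).
Proof.
apply: (@is_derive_line _ _ _ _ _
  (fun t => sqnorm w * t ^+ 2 + sqdist_deriv y x w * t + sqdist y x)).
  by apply: funext => t; rewrite /line sqdist_line.
by apply: is_derive_eq; rewrite /GRing.scale /=; ring.
Qed.

Lemma partial_sqdist (y : V) i : partial i (sqdist y) = fun x => 2 * (x 0 i - y 0 i).
Proof.
apply: funext => x; rewrite /partial.
by have [_ ->] := is_derive_sqdist y x (basis_vec i); rewrite sqdist_deriv_basis.
Qed.

Lemma is_derive_partial_sqdist (y x : V) i :
  is_derive x (basis_vec i) (fun x : V => 2 * (x 0 i - y 0 i)) 2.
Proof.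
apply: (@is_derive_line _ _ _ _ _ (fun t => 2 * (t + x 0 i - y 0 i))).
  by apply: funext => t; rewrite /line /= line_basis_entry.
by apply: is_derive_eq; rewrite /GRing.scale /=; ring.
Qed.

Lemma pure2_derivable_sqdist (y : V) : pure2_derivable (sqdist y).
Proof.
split=> [x w|i x]; first by have [] := is_derive_sqdist y x w.
by rewrite partial_sqdist; have [] := is_derive_partial_sqdist y x i.
Qed.

Lemma laplacian_sqdist (y x : V) : laplacian (sqdist y) x = 2 * N%:R.
Proof.
rewrite /laplacian (eq_bigr (fun _ => 2)) ?sumr_const ?card_ord ?mulr_natr // => i _.
by rewrite partial_sqdist; have [] := is_derive_partial_sqdist y x i.
Qed.

End SquaredDistance.

Section Barrier.
Context {R : realType} {N : nat}.
Notation V := 'rV[R]_N.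
Variables (y : V) (K be : R).

(* A polynomial stand-in for the classical barrier exp (- a |x - y|^2) - exp (- a K):
   it vanishes on the sphere sqdist y x = K, and for be of order N / K it satisfies
   L h <= Delta h on a thin shell inside that sphere. *)
Definition hopf_barrier (x : V) : R := (K - sqdist y x) + be * (K - sqdist y x) ^+ 2.

Lemma is_derive_hopf_barrier (x w : V) : is_derive x w hopf_barrier
  (- ((1 + 2 * be * (K - sqdist y x)) * sqdist_deriv y x w)).
Proof.
pose p t := sqnorm w * t ^+ 2 + sqdist_deriv y x w * t + sqdist y x.
apply: (@is_derive_line _ _ _ _ _ (fun t => (K - p t) + be * (K - p t) ^+ 2)).
  by apply: funext => t; rewrite /line /hopf_barrier sqdist_line.
by apply: is_derive_eq; rewrite /p /GRing.scale /=; ring.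
Qed.

Lemma partial_hopf_barrier i : partial i hopf_barrier =
  fun x => - ((1 + 2 * be * (K - sqdist y x)) * (2 * (x 0 i - y 0 i))).
Proof.
apply: funext => x; rewrite /partial.
by have [_ ->] := is_derive_hopf_barrier x (basis_vec i); rewrite sqdist_deriv_basis.
Qed.

Lemma is_derive_partial_hopf_barrier (x : V) i :
  is_derive x (basis_vec i) (partial i hopf_barrier)
    (8 * be * (x 0 i - y 0 i) ^+ 2 - 2 * (1 + 2 * be * (K - sqdist y x))).
Proof.
rewrite partial_hopf_barrier; set a := x 0 i - y 0 i.
pose p t := t ^+ 2 + 2 * a * t + sqdist y x.
apply: (@is_derive_line _ _ _ _ _
  (fun t => - ((1 + 2 * be * (K - p t)) * (2 * (t + a))))).
  apply: funext => t; rewrite /line sqdist_line sqnorm_basis sqdist_deriv_basis.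
  by rewrite line_basis_entry /p /a; ring.
by apply: is_derive_eq; rewrite /p /GRing.scale /=; ring.
Qed.

Lemma pure2_derivable_hopf_barrier : pure2_derivable hopf_barrier.
Proof.
split=> [x w|i x]; first by have [] := is_derive_hopf_barrier x w.
by have [] := is_derive_partial_hopf_barrier x i.
Qed.

Lemma laplacian_hopf_barrier (x : V) : laplacian hopf_barrier x =
  8 * be * sqdist y x - 2 * N%:R * (1 + 2 * be * (K - sqdist y x)).
Proof.
rewrite /laplacian (eq_bigr (fun i =>
  8 * be * (x 0 i - y 0 i) ^+ 2 - 2 * (1 + 2 * be * (K - sqdist y x)))).
  by rewrite big_split /= -mulr_sumr sumrN sumr_const card_ord /sqdist -mulr_natl; ring.
by move=> i _; have [] := is_derive_partial_hopf_barrier x i.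
Qed.

End Barrier.

Lemma near_continuous_lt {R : realType} {T : normedModType R} (g : T -> R) (x : T) (b : R) :
  {for x, continuous g} -> g x < b ->
  exists2 r : R, 0 < r & forall y, `|y - x| < r -> g y < b.
Proof.
move=> cg gb.
have h : \forall y \near x, g y < b := @cvgr_lt R T _ (nbhs_filter x) _ _ cg b gb.
move: h => /nbhs_ballP[r r0 Hr]; exists r => // y yr.
by apply: Hr; rewrite -ball_normE /ball_ /= distrC.
Qed.

Section Compactness.
Context {R : realType} {N : nat}.
Notation V := 'rV[R]_N.

Lemma near_continuous_between (g : V -> R) (x : V) (a b : R) :
  continuous g -> a < g x -> g x < b ->
  exists2 r : R, 0 < r & forall y, `|y - x| < r -> a < g y /\ g y < b.
Proof.
move=> cg ag gb; have [r1 r10 H1] := near_continuous_lt (cg x) gb.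
have cNg : {for x, continuous (fun y => - g y)} := continuousN (cg x).
have Nga : - g x < - a by rewrite ltrN2.
have [r2 r20 H2] := near_continuous_lt cNg Nga.
exists (Num.min r1 r2); first by rewrite lt_min r10.
by move=> y; rewrite lt_min => /andP[y1 y2]; rewrite -ltrN2 H1 ?H2.
Qed.

Lemma continuous_subZ (b : R) (u w : V -> R) : continuous u -> continuous w ->
  continuous (fun x => u x - b * w x).
Proof.
move=> cu cw x.
have cbw : {for x, continuous (fun y => b * w y)}.
  by apply: (@continuousM R V (fun _ => b) w x); [exact: cst_continuous | exact: cw].
exact: (@continuousB R R V u (fun y => b * w y) x (cu x) cbw).
Qed.

Lemma continuous_sqdist (y : V) : continuous (sqdist y).
Proof.
have -> : sqdist y = \sum_(j < N) (fun x : V => (x 0 j - y 0 j) ^+ 2).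
  by apply: funext => x; rewrite /sqdist fct_sumE.
apply: (big_ind (fun f : V -> R => continuous f)) => [|f g cf cg x|j _].
- exact: cst_continuous.
- exact: (@continuousD R R V f g x (cf x) (cg x)).
have c1 : continuous (fun x : V => x 0 j - y 0 j).
  by move=> x; apply: (@continuousB R R V (fun x => x 0 j) (fun _ => y 0 j) x);
    [exact: coord_continuous | exact: cst_continuous].
have -> : (fun x : V => (x 0 j - y 0 j) ^+ 2) =
  (fun x => x 0 j - y 0 j) \* (fun x => x 0 j - y 0 j).
  by apply: funext => z; rewrite /= expr2.
by move=> x; exact: (@continuousM R V _ _ x (c1 x) (c1 x)).
Qed.

Lemma continuous_derivable_comp (g : V -> R) (phi : R -> R) :
  continuous g -> (forall s, derivable phi s 1) -> continuous (fun x => phi (g x)).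
Proof.
move=> cg dphi x; apply: (continuous_comp (cg x)).
exact/differentiable_continuous/derivable1_diffP.
Qed.

Lemma continuous_hopf_barrier (y : V) (K be : R) : continuous (hopf_barrier y K be).
Proof.
apply: (continuous_derivable_comp (phi := fun s => (K - s) + be * (K - s) ^+ 2)).
  exact: continuous_sqdist.
have dphi s : is_derive s (1:R) (fun s => (K - s) + be * (K - s) ^+ 2)
  (-1 - 2 * be * (K - s)) by apply: is_derive_eq; rewrite /GRing.scale /=; ring.
by move=> s; have [] := dphi s.
Qed.

Lemma norm_le_sqdist (x y : V) : `|x - y| <= 1 + sqdist y x.
Proof.
rewrite [leLHS]/Num.norm /= mx_normrE; apply/bigmax_leP; split.
  by rewrite addr_ge0 ?sqdist_ge0.
move=> [a b] _ /=; rewrite ord1 !mxE.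
have H1 : `|x 0 b - y 0 b| <= 1 + (x 0 b - y 0 b) ^+ 2.
  rewrite -real_normK ?num_real //; have := normr_ge0 (x 0 b - y 0 b); nra.
have H2 : (x 0 b - y 0 b) ^+ 2 <= sqdist y x.
  by rewrite /sqdist (bigD1 b) //= lerDl; apply: sumr_ge0 => *; apply: sqr_ge0.
lra.
Qed.

Lemma sqdist_le_norm (x y : V) : sqdist y x <= N%:R * `|x - y| ^+ 2.
Proof.
have -> : N%:R * `|x - y| ^+ 2 = \sum_(j < N) `|x - y| ^+ 2.
  by rewrite sumr_const card_ord mulr_natl.
rewrite /sqdist; apply: ler_sum => j _.
have := mx_entry_le_norm (x - y) j; rewrite !mxE => h.
by rewrite -real_normK ?num_real //; apply: lerXn2r; rewrite ?nnegrE.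
Qed.

Lemma norm_le_of_sqdist (x y : V) (C : R) : sqdist y x <= C -> `|x| <= 1 + C + `|y|.
Proof.
move=> h; rewrite -[x](subrK y); apply: le_trans (ler_normD _ _) _; rewrite lerD2r.
by apply: le_trans (norm_le_sqdist x y) _; rewrite lerD2l.
Qed.

Lemma closed_bounded_min (g : V -> R) (A : set V) (M : R) (x0 : V) :
  continuous g -> closed A -> (forall x, A x -> `|x| <= M) -> A x0 ->
  exists2 c, A c & forall t, A t -> g c <= g t.
Proof.
move=> cg clA bA Ax0.
have cA : compact A.
  apply: bounded_closed_compact => //; exists M; split; first by rewrite num_real.
  by move=> M' MM' x Ax; apply: le_trans (bA x Ax) (ltW MM').
have [c] := EVT_min_rV (ex_intro _ x0 Ax0) cA (continuous_subspaceT cg).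
by rewrite inE => Ac cmin; exists c => // t At; apply: cmin; rewrite inE.
Qed.

Lemma closed_fun_le (g : V -> R) (c : R) : continuous g -> closed [set x | g x <= c].
Proof. by move=> cg; apply: (preimage_closed (D := [set r | r <= c])) => //; exact: closed_le. Qed.

Lemma closed_fun_ge (g : V -> R) (c : R) : continuous g -> closed [set x | c <= g x].
Proof. by move=> cg; apply: (preimage_closed (D := [set r | c <= r])) => //; exact: closed_ge. Qed.

Lemma continuous_bounded_ball (g : V -> R) (rho : R) : continuous g ->
  exists M : R, forall y, `|y| <= rho -> `|g y| <= M.
Proof.
move=> cg; have [rho0|rho0] := ltrP rho 0.
  by exists 0 => y hy; have := normr_ge0 y; rewrite leNgt (le_lt_trans hy rho0).
have cn : continuous (fun y => - `|g y|).
  move=> x; apply: (@continuousN R R V (fun y => `|g y|) x).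
  exact: continuous_comp (cg x) (@norm_continuous R R^o _).
have [|c _ cmin] := closed_bounded_min (x0 := 0) cn
  (closed_fun_le (c := rho) (@norm_continuous R V)) (fun x h => h).
  by rewrite /= normr0.
by exists `|g c| => y hy; rewrite -lerN2; apply: cmin.
Qed.

Lemma vanishes_bounded (g : V -> R) : continuous g -> vanishes_at_infinity g ->
  exists M : R, forall y, `|g y| <= M.
Proof.
move=> cg vg; have [R0 HR0] := vg 1 ltr01; have [M HM] := continuous_bounded_ball R0 cg.
exists (Num.max M 1) => y; rewrite le_max; have [h|h] := lerP `|y| R0.
  by rewrite HM.
by rewrite (ltW (HR0 y h)) orbT.
Qed.

Lemma vanishes_translate (u : V -> R) (c : V) :
  vanishes_at_infinity u -> vanishes_at_infinity (fun x => u (c + x)).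
Proof.
move=> vu e e0; have [M HM] := vu e e0; exists (M + `|c|) => x hx; apply: HM.
have : `|x| <= `|c + x| + `|c| by rewrite -[in leLHS](addKr c x) addrC ler_normB.
lra.
Qed.

Lemma vanishes_sub (u w : V -> R) : vanishes_at_infinity u -> vanishes_at_infinity w ->
  vanishes_at_infinity (fun x => u x - w x).
Proof.
move=> vu vw e e0; have e20 : 0 < e / 2 by rewrite divr_gt0.
have [M1 H1] := vu _ e20; have [M2 H2] := vw _ e20.
exists (Num.max M1 M2) => x; rewrite gt_max => /andP[x1 x2].
apply: le_lt_trans (ler_normB _ _) _.
by rewrite (splitr e) ltrD ?H1 ?H2.
Qed.

End Compactness.

Lemma solution_bounded {R : realType} {N : nat} (f : R -> R) (u : 'rV[R]_N -> R) :
  is_solution f u -> exists M : R, forall y, `|u y| <= M.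
Proof. by move=> hu; apply: vanishes_bounded (solution_continuous hu) _; case: hu => _ []. Qed.

Section StrongMinimumPrinciple.
Context {R : realType} {N : nat}.
Notation V := 'rV[R]_N.

Lemma nearest_zero (v : V -> R) (y0 xs : V) : continuous v ->
  (forall x, 0 <= v x) -> v xs = 0 -> 0 < v y0 ->
  exists p, [/\ v p = 0, 0 < sqdist y0 p & forall x, sqdist y0 x < sqdist y0 p -> 0 < v x].
Proof.
move=> cv vge vxs vy0; set C := sqdist y0 xs.
have [|p [vp qp] pmin] := closed_bounded_min (x0 := xs) (continuous_sqdist (y := y0))
  (closedI (closed_fun_le (c := 0) cv) (closed_fun_le (c := C) (continuous_sqdist (y := y0))))
  (fun x hx => norm_le_of_sqdist hx.2).
  by split=> /=; rewrite ?vxs ?lexx.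
have vp0 : v p = 0 by apply/eqP; rewrite eq_le vp vge.
have zmin x : v x = 0 -> sqdist y0 p <= sqdist y0 x.
  move=> vx; have [h|h] := lerP (sqdist y0 x) C; first by apply: pmin; rewrite /= vx.
  exact: le_trans qp (ltW h).
exists p; split=> // [|x h].
  rewrite lt_def sqdist_ge0 andbT; apply/eqP => /sqdist_eq0 py.
  by move: vy0; rewrite -py vp0 ltxx.
rewrite lt_def vge andbT; apply/eqP => /zmin.
by rewrite leNgt h.
Qed.

Lemma hopf_barrier_subsolution (y : V) (r2 be L mu : R) :
  0 <= L -> 0 <= be -> be * r2 = N%:R -> mu <= 1 ->
  mu * (8 * be + 4 * N%:R * be + L + L * be) <= N%:R ->
  forall x, r2 - mu <= sqdist y x -> sqdist y x <= r2 ->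
  L * hopf_barrier y r2 be x <= laplacian (hopf_barrier y r2 be) x.
Proof.
move=> L0 be0 ber mu1 muC x h1 h2; rewrite laplacian_hopf_barrier /hopf_barrier.
set s := r2 - sqdist y x; have -> : sqdist y x = r2 - s by rewrite /s opprB addrC subrK.
have s0 : 0 <= s by rewrite subr_ge0.
have smu : s <= mu by rewrite /s lerBlDr addrC -lerBlDr.
have N0 : 0 <= N%:R :> R by [].
set Cc := 8 * be + 4 * N%:R * be + L + L * be.
have sC : s * Cc <= N%:R.
  by apply: le_trans muC; rewrite ler_wpM2r // /Cc; nra.
have ss : L * be * s * s <= L * be * s.
  by rewrite -[leRHS]mulr1 ler_wpM2l ?(le_trans smu) // !mulr_ge0.
have e1 : 8 * be * (r2 - s) = 8 * N%:R - 8 * be * s by rewrite -ber; ring.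
rewrite e1; rewrite /Cc in sC; nra.
Qed.

Lemma annulus_min_principle (z : V -> R) (y : V) (a b : R) :
  continuous z -> pure2_derivable z ->
  (forall x, sqdist y x = a -> 0 <= z x) -> (forall x, sqdist y x = b -> 0 <= z x) ->
  (forall x, a < sqdist y x < b -> z x < 0 -> laplacian z x < 0) ->
  forall x, a <= sqdist y x <= b -> 0 <= z x.
Proof.
move=> cz dz za zb lapz x /andP[xa xb].
have [|x1 [a1 b1] x1min] := closed_bounded_min (x0 := x) cz
  (closedI (closed_fun_ge (c := a) (continuous_sqdist (y := y)))
           (closed_fun_le (c := b) (continuous_sqdist (y := y))))
  (fun x hx => norm_le_of_sqdist hx.2); first by split.
apply: le_trans (x1min x (conj xa xb)); rewrite leNgt; apply/negP => zneg.
have [b1'|b1'] := ltrP (sqdist y x1) b; last first.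
  by move: zneg; rewrite ltNge zb //; apply/eqP; rewrite eq_le b1 b1'.
have [a1'|a1'] := ltrP a (sqdist y x1); last first.
  by move: zneg; rewrite ltNge za //; apply/eqP; rewrite eq_le a1 a1'.
have [r r0 Hr] := near_continuous_between (continuous_sqdist (y := y)) a1' b1'.
have := laplacian_ge0_at_min dz r0 (fun y hy => x1min y
  (conj (ltW (Hr y hy).1) (ltW (Hr y hy).2))).
by rewrite leNgt lapz ?a1' ?b1'.
Qed.

Lemma hopf_comparison (v : V -> R) (L r2 : R) (y0 : V) : (0 < N)%N ->
  pure2_derivable v -> continuous v -> 0 < L ->
  (forall x, 0 <= v x) -> (forall x, laplacian v x <= L * v x) -> 0 < r2 ->
  (forall x, sqdist y0 x < r2 -> 0 < v x) ->
  exists2 mu, 0 < mu & exists2 eps, 0 < eps & forall x,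
    r2 - mu <= sqdist y0 x <= r2 -> eps * hopf_barrier y0 r2 (N%:R / r2) x <= v x.
Proof.
move=> N0 dv cv L0 vge lapv r20 pos_in.
(* be and mu make h a subsolution on the shell r2 - mu <= sqdist y0 x <= r2, and eps
   makes eps h <= v on its inner sphere, where h equals mu + be mu^2. *)
have Nr0 : 0 < N%:R :> R by rewrite ltr0n.
set be := N%:R / r2; have be0 : 0 < be by rewrite divr_gt0.
have ber : be * r2 = N%:R by rewrite divfK // gt_eqF.
set Cc := 8 * be + 4 * N%:R * be + L + L * be.
have Cc0 : 0 < Cc by rewrite /Cc; nra.
set mu := Num.min (Num.min (r2 / 2) 1) (N%:R / Cc).
have mu0 : 0 < mu by rewrite !lt_min !divr_gt0 // ltr01.
have mur : mu <= r2 / 2 by rewrite /mu !ge_min lexx.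
have mu1 : mu <= 1 by rewrite /mu !ge_min lexx orbT.
have muC : mu * Cc <= N%:R by rewrite -ler_pdivlMr // /mu ge_min lexx orbT.
have [|c qc cmin] := closed_bounded_min (x0 := y0) cv
  (closed_fun_le (c := r2 - mu) (continuous_sqdist (y := y0)))
  (fun x hx => norm_le_of_sqdist hx).
  by rewrite /= sqdistxx subr_ge0 (le_trans mur) // ler_pdivrMr // ler_pMr // ler1n.
set eta := v c.
have eta0 : 0 < eta by apply: pos_in; apply: le_lt_trans qc _; rewrite ltrBlDr ltrDl.
set eps := eta / (mu + be * mu ^+ 2).
have H0 : 0 < mu + be * mu ^+ 2 by rewrite ltr_pwDl // mulr_ge0 ?sqr_ge0 // ltW.
have eps0 : 0 < eps by rewrite divr_gt0.
have epsH : eps * (mu + be * mu ^+ 2) = eta by rewrite divfK // gt_eqF.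
set h := hopf_barrier y0 r2 be.
have dh : pure2_derivable h := pure2_derivable_hopf_barrier y0 r2 be.
exists mu => //; exists eps => // x hx; rewrite -subr_ge0; move: x hx.
apply: (annulus_min_principle (z := fun x => v x - eps * h x)).
- by apply: continuous_subZ cv _; apply: continuous_hopf_barrier.
- exact: pure2_derivable_subZ dv dh.
- move=> x qx; have vx : eta <= v x by apply: cmin; rewrite /= qx.
  by rewrite /h /hopf_barrier qx (_ : r2 - (r2 - mu) = mu) ?epsH ?subr_ge0 //; ring.
- move=> x qx; rewrite /h /hopf_barrier qx subrr expr0n mulr0 addr0 mulr0 subr0.
  exact: vge.
- move=> x /andP[x1 x2] zx; rewrite laplacian_subZ //.
  have := hopf_barrier_subsolution (ltW L0) (ltW be0) ber mu1 muC (ltW x1) (ltW x2).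
  have := lapv x; move: zx; rewrite -/h => zx h1 h2.
  have : L * (v x - eps * h x) < 0 by rewrite pmulr_rlt0.
  have : eps * (L * h x) <= eps * laplacian h x by rewrite ler_pM2l.
  nra.
Qed.

Lemma hopf_lemma (v : V -> R) (L : R) (y0 p : V) : (0 < N)%N ->
  pure2_derivable v -> continuous v -> 0 < L ->
  (forall x, 0 <= v x) -> (forall x, laplacian v x <= L * v x) ->
  v p = 0 -> 0 < sqdist y0 p -> (forall x, sqdist y0 x < sqdist y0 p -> 0 < v x) ->
  0 < 'D_(y0 - p) v p.
Proof.
move=> N0 dv cv L0 vge lapv vp0 r20 pos_in; set r2 := sqdist y0 p in r20 pos_in *.
have [mu mu0 [eps eps0 comp]] := hopf_comparison N0 dv cv L0 vge lapv r20 pos_in.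
set h := hopf_barrier y0 r2 (N%:R / r2) in comp *.
set z := fun x => v x - eps * h x.
have zp : z p = 0.
  by rewrite /z /h /hopf_barrier -/r2 subrr expr0n mulr0 addr0 mulr0 vp0 subr0.
set w := y0 - p.
have sq_line t : sqdist y0 (t *: w + p) = r2 * t ^+ 2 - 2 * r2 * t + r2.
  by rewrite sqdist_line sqnormB sqdist_derivB -/r2; ring.
set tau := Num.min (mu / (2 * r2)) 1.
have tau0 : 0 < tau by rewrite lt_min ltr01 divr_gt0 // mulr_gt0.
have zline t : 0 < t -> t < tau -> line z p w 0 <= line z p w t.
  move=> t0; rewrite lt_min => /andP[tt t1].
  rewrite line0 zp /line /z subr_ge0; apply: comp.
  have tt' : t * (2 * r2) < mu by rewrite -ltr_pdivlMr // mulr_gt0.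
  have rt : 0 <= r2 * t by rewrite mulr_ge0 // ltW.
  by rewrite sq_line; apply/andP; split; nra.
have dh : pure2_derivable h := pure2_derivable_hopf_barrier _ _ _.
have dz : pure2_derivable z := pure2_derivable_subZ eps dv dh.
have := right_min_derive1_ge0 (pure2_derivable_line (x := p) (w := w) (t := 0) dz) tau0 zline.
have [dv1 _] := dv; have [dh1 dh2] := is_derive_hopf_barrier y0 r2 (N%:R / r2) p w.
rewrite derive1_line scale0r add0r derive_subZ // -/h dh2 -/r2 subrr mulr0 addr0 mul1r.
rewrite /w sqdist_derivB -/r2 opprK.
have := mulr_gt0 eps0 (mulr_gt0 (ltr0Sn R 1) r20).
lra.
Qed.

Theorem strong_min_principle (v : V -> R) (L : R) : (0 < N)%N ->
  pure2_derivable v -> continuous v -> 0 < L ->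
  (forall x, 0 <= v x) -> (forall x, laplacian v x <= L * v x) ->
  forall xs, v xs = 0 -> forall y, v y = 0.
Proof.
move=> N0 dv cv L0 vge lapv xs vxs y0.
apply/eqP; rewrite eq_le vge andbT leNgt; apply/negP => vy0.
have [p [vp0 r20 pos_in]] := nearest_zero cv vge vxs vy0.
have := hopf_lemma N0 dv cv L0 vge lapv vp0 r20 pos_in.
have := @local_min_derive1_eq0 _ (line v p (y0 - p)) 1 ltr01
  (fun t => pure2_derivable_line (x := p) (w := y0 - p) (t := t) dv).
rewrite derive1_line scale0r add0r => -> //; first by rewrite ltxx.
by move=> t _; rewrite line0 vp0 vge.
Qed.

End StrongMinimumPrinciple.

Section SlidingMethod.
Context {R : realType} {N : nat}.
Notation V := 'rV[R]_N.

(* Penalizing by a small multiple of |x - xn|^2 makes the minimum of [g] strict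
   enough to contradict [laplacian g <= 0]. *)
Lemma vanishing_min_principle (g : V -> R) : (0 < N)%N ->
  pure2_derivable g -> continuous g -> vanishes_at_infinity g ->
  (forall x, g x < 0 -> laplacian g x <= 0) -> forall x, 0 <= g x.
Proof.
move=> N0 dg cg vg lapg xn; rewrite leNgt; apply/negP => m0; set m := g xn in m0.
have m20 : 0 < - m / 2 by rewrite divr_gt0 // oppr_gt0.
have [Mk HMk] := vg _ m20.
have Kb x : g x <= m / 2 -> `|x| <= Mk.
  move=> gx; rewrite leNgt; apply/negP => /HMk; rewrite ltr_norml => /andP[+ _]; lra.
have Nr0 : 0 < N%:R :> R by rewrite ltr0n.
set D := N%:R * (Mk + `|xn|) ^+ 2 + 1.
have D0 : 0 < D by rewrite ltr_wpDl // mulr_ge0 // ?sqr_ge0 // ltW.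
set ka := (- m / 4) / D.
have ka0 : 0 < ka by rewrite !divr_gt0 // oppr_gt0.
have kaD : ka * D = - m / 4 by rewrite divfK // gt_eqF.
set z := fun x => g x - ka * sqdist xn x.
have cz : continuous z := continuous_subZ (b := ka) cg (continuous_sqdist (y := xn)).
have [|x1 x1K x1min] := closed_bounded_min (x0 := xn) cz
  (closed_fun_le (c := m / 2) cg) Kb.
  by rewrite /= -/m; lra.
have zx1 : z x1 <= m by have := x1min xn; rewrite /z sqdistxx mulr0 subr0 /= -/m; apply; lra.
have qx1 : sqdist xn x1 <= D.
  have hx1 : `|x1 - xn| <= Mk + `|xn| by apply: le_trans (ler_normB _ _) _; rewrite lerD2r Kb.
  have hx2 : `|x1 - xn| ^+ 2 <= (Mk + `|xn|) ^+ 2.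
    by rewrite lerXn2r // ?nnegrE // (le_trans _ hx1).
  apply: le_trans (sqdist_le_norm x1 xn) _; apply: le_trans (ler_wpM2l (ltW Nr0) hx2) _.
  by rewrite lerDl.
have gx1 : g x1 < m / 2.
  have : ka * sqdist xn x1 <= - m / 4 by rewrite -kaD ler_wpM2l // ltW.
  by move: zx1; rewrite /z; lra.
have [r r0 Hr] := near_continuous_lt (cg x1) gx1.
have := laplacian_ge0_at_min (pure2_derivable_subZ ka dg (pure2_derivable_sqdist xn)) r0
  (fun y hy => x1min y (ltW (Hr y hy))).
rewrite (laplacian_subZ ka dg (pure2_derivable_sqdist xn)) laplacian_sqdist.
have gx1neg : g x1 < 0 by apply: lt_trans gx1 _; rewrite -/m; lra.
have := lapg x1 gx1neg; have := mulr_gt0 ka0 (mulr_gt0 (ltr0Sn R 1) Nr0).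
lra.
Qed.

Lemma line_increment_le (U : V -> R) (x d : V) (t s Md : R) :
  (forall y, derivable U y d) -> t <= s ->
  (forall r, t <= r -> r <= s -> `|'D_d U (r *: d + x)| <= Md) ->
  `|U (s *: d + x) - U (t *: d + x)| <= Md * (s - t).
Proof.
move=> dU ts hb; have dl r : derivable (line U x d) r 1 by apply/derivable_line.
have [c /andP[tc cs] eq] := derivable_MVT_segment ts dl.
have st0 : 0 <= s - t by rewrite subr_ge0.
rewrite /line derive1_line in eq; rewrite eq normrM (ger0_norm st0).
by rewrite ler_wpM2r ?hb.
Qed.

Lemma solutions_lipschitz (f : R -> R) (U W : V -> R) : C1 f ->
  is_solution f U -> is_solution f W ->
  exists2 L : R, 0 < L & forall y z, `|f (U y) - f (W z)| <= L * `|U y - W z|.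
Proof.
move=> hf hU hW; have [MU HU] := solution_bounded hU; have [MW HW] := solution_bounded hW.
have [L L0 HL] := C1_lipschitz_bounded (Num.max MU MW) hf.
by exists L => // y z; apply: HL; rewrite le_max ?HU ?HW ?orbT.
Qed.

Lemma laplacian_translate_sub (f : R -> R) (U W : V -> R) (c x : V) :
  is_solution f U -> is_solution f W ->
  laplacian (fun y => U (c + y) - W y) x = f (W x) - f (U (c + x)).
Proof.
move=> hU hW.
have dUc := @pure2_derivable_translate _ _ c U (solution_pure2_derivable hU).
rewrite (@laplacian_sub _ _ _ _ x dUc (solution_pure2_derivable hW)).
by rewrite laplacian_translate (solution_laplacian hU) (solution_laplacian hW) opprK addrC.
Qed.

Lemma continuous_translate_sub (U W : V -> R) (c : V) : continuous U -> continuous W ->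
  continuous (fun y => U (c + y) - W y).
Proof.
move=> cU cW; have -> : (fun y => U (c + y) - W y) = (fun y => U (c + y) - 1 * W y).
  by apply: funext => y; rewrite mul1r.
have ct : continuous (fun z : V => c + z).
  move=> z; apply: (@continuousD R V V (cst c) id z); [exact: cst_continuous | exact: cvg_id].
apply: continuous_subZ cW => y; exact: continuous_comp (ct y) (cU _).
Qed.

Lemma slide_positive_on_ball (U W : V -> R) (d : V) (ts rho : R) :
  (forall y, derivable U y d) -> continuous ('D_d U) ->
  continuous (fun x => U (ts *: d + x) - W x) -> `|d| = 1 -> 0 <= ts -> 0 <= rho ->
  (forall x, W x < U (ts *: d + x)) ->
  exists2 sg : R, 0 < sg &
    forall s x, ts <= s -> s < ts + sg -> `|x| <= rho -> W x < U (s *: d + x).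
Proof.
move=> dU cD cv nd ts0 rho0 vpos.
have [|c _ cmin] := closed_bounded_min (x0 := 0) cv
  (closed_fun_le (c := rho) (@norm_continuous R V)) (fun x h => h).
  by rewrite /= normr0.
set eta := U (ts *: d + c) - W c; have eta0 : 0 < eta by rewrite subr_gt0.
have [Md HMd] := continuous_bounded_ball (rho + ts + 1) cD.
set Mp := `|Md| + 1; have Mp0 : 0 < Mp by rewrite ltr_wpDl.
set sg := Num.min 1 (eta / (2 * Mp)).
have sg0 : 0 < sg by rewrite lt_min ltr01 divr_gt0 // mulr_gt0.
have sgM : sg * (2 * Mp) <= eta by rewrite -ler_pdivlMr ?mulr_gt0 // ge_min lexx orbT.
exists sg => // s x tss ssg hx.
have hb : `|U (s *: d + x) - U (ts *: d + x)| <= Mp * (s - ts).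
  apply: line_increment_le => // r h1 h2; apply: le_trans (HMd _ _) _.
    apply: le_trans (ler_normD _ _) _; rewrite normrZ nd mulr1 ger0_norm ?(le_trans ts0) //.
    have : r < ts + 1 by apply: le_lt_trans h2 (lt_le_trans ssg _); rewrite lerD2l ge_min lexx.
    lra.
  by rewrite (le_trans (ler_norm _)) // lerDl.
have vx : eta <= U (ts *: d + x) - W x by apply: cmin.
have : Mp * (s - ts) < eta.
  have : s - ts < sg by lra.
  nra.
have := ler_norm (U (ts *: d + x) - U (s *: d + x)); rewrite distrC.
lra.
Qed.

Definition crossing_shifts (U W : V -> R) (d : V) : set R :=
  [set t | 0 <= t /\ exists x, U (t *: d + x) < W x].

Lemma norm_translate_ge (t : R) (d y : V) : 0 <= t -> `|d| = 1 ->
  `|y| <= `|t *: d + y| + t.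
Proof.
move=> t0 nd; have := ler_normB (t *: d + y) (t *: d).
by rewrite addrAC subrr add0r normrZ nd mulr1 ger0_norm.
Qed.

Lemma le_translate_inf_crossing (U W : V -> R) (d : V) :
  (forall y, derivable U y d) -> (forall x, W x <= U x) ->
  crossing_shifts U W d !=set0 ->
  forall x, W x <= U (inf (crossing_shifts U W d) *: d + x).
Proof.
move=> dU WU [t0 St0] x; set S := crossing_shifts U W d; set ts := inf S.
have Slb : has_lbound S by exists 0 => t [].
have ts0 : 0 <= ts by apply: lb_le_inf; [exists t0 | move=> t []].
rewrite leNgt; apply/negP => h.
have [ts00|tspos] := eqVneq ts 0.
  by move: h; rewrite ts00 scale0r add0r ltNge WU.
have tsp : 0 < ts by rewrite lt_def tspos ts0.
have cl : {for ts, continuous (line U x d)}.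
  by apply/differentiable_continuous/derivable1_diffP; apply/derivable_line.
have [r r0 Hr] := near_continuous_lt cl h.
have [s [s0 sr sts]] := between_min r0 tsp.
have : ts <= ts - s.
  apply: ge_inf => //; split; first by rewrite subr_ge0 ltW.
  by exists x; apply: Hr; rewrite addrAC subrr add0r normrN gtr0_norm.
lra.
Qed.

(* A shift s in the crossing set slightly beyond its infimum keeps U (s d + .)
   above W on a large ball, while outside that ball both solutions stay in the
   range where f is nonincreasing; hence U (s d + .) - W is superharmonic where
   negative, and the minimum principle makes it nonnegative. *)
Lemma not_strictly_above_at_inf_crossing (f : R -> R) (U W : V -> R) (d : V) (de : R) :
  (0 < N)%N -> C1 f -> 0 < de -> (forall s, `|s| < de -> derive1 f s <= 0) ->
  is_solution f U -> is_solution f W -> `|d| = 1 -> continuous ('D_d U) ->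
  crossing_shifts U W d !=set0 ->
  ~ (forall x, W x < U (inf (crossing_shifts U W d) *: d + x)).
Proof.
move=> N0 hf de0 hde hU hW nd cD [t0 St0]; set S := crossing_shifts U W d.
set ts := inf S; move=> vpos.
have dU := solution_pure2_derivable hU; have dW := solution_pure2_derivable hW.
have [dU1 _] := dU.
have cU := solution_continuous hU; have cW := solution_continuous hW.
have Sinf : has_inf S by split; [exists t0 | exists 0 => t []].
have ts0 : 0 <= ts by apply: lb_le_inf; [exists t0 | move=> t []].
have cv := continuous_translate_sub (c := ts *: d) cU cW.
have [_ [_ vU]] := hU; have [_ [_ vW]] := hW.
have [R0 HR0] := vW de de0; have [R1 HR1] := vU de de0.
set Rb := Num.max (Num.max R0 (R1 + ts + 1)) 0.
have RbR0 : R0 <= Rb by rewrite /Rb !le_max lexx.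
have RbR1 : R1 + ts + 1 <= Rb by rewrite /Rb !le_max lexx orbT.
have Rb0 : 0 <= Rb by rewrite /Rb !le_max lexx orbT.
have [sg sg0 Hsg] := slide_positive_on_ball (fun y => dU1 y d) cD cv nd ts0 Rb0 vpos.
have m0 : 0 < Num.min sg 1 by rewrite lt_min sg0 ltr01.
have [s [s0 [xn hxn]] sts] := inf_adherent m0 Sinf.
have tss : ts <= s by apply: ge_inf; [exists 0 => t [] | split=> //; exists xn].
have : s - ts < Num.min sg 1 by rewrite ltrBlDl.
rewrite lt_min => /andP[ssg s1].
set vs := fun x => U (s *: d + x) - W x.
have dvs : pure2_derivable vs.
  exact: pure2_derivable_sub (pure2_derivable_translate (s *: d) dU) dW.
have cvs : continuous vs := continuous_translate_sub (c := s *: d) cU cW.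
have vvs : vanishes_at_infinity vs := vanishes_sub (vanishes_translate (s *: d) vU) vW.
have lapvs x : vs x < 0 -> laplacian vs x <= 0.
  move=> vsx; rewrite (laplacian_translate_sub _ x hU hW) subr_le0.
  have Ux : U (s *: d + x) < W x by rewrite -subr_lt0.
  have far : Rb < `|x|.
    rewrite ltNge; apply/negP => hx.
    by move: Ux; rewrite ltNge ltW // Hsg // -ltrBlDl.
  have Wsmall : `|W x| < de by apply: HR0; apply: le_lt_trans far.
  have Usmall : `|U (s *: d + x)| < de.
    by apply: HR1; have := norm_translate_ge x s0 nd; lra.
  have [df _] := hf.
  exact: derive1_le0_nonincreasing df hde _ _ Usmall Wsmall (ltW Ux).
have := vanishing_min_principle N0 dvs cvs vvs lapvs xn.
by rewrite /vs subr_ge0 leNgt hxn.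
Qed.

Theorem sliding_alternative (f : R -> R) (U W : V -> R) (d : V) (de : R) :
  (0 < N)%N -> C1 f -> 0 < de -> (forall s, `|s| < de -> derive1 f s <= 0) ->
  is_solution f U -> is_solution f W -> (forall x, W x <= U x) -> U <> W ->
  `|d| = 1 -> continuous ('D_d U) ->
  (forall t, 0 <= t -> forall x, W x <= U (t *: d + x)) \/
  (exists2 tau, 0 < tau & forall x, U (tau *: d + x) = W x).
Proof.
move=> N0 hf de0 hde hU hW WU UW nd cD; set S := crossing_shifts U W d.
have [[t0 St0]|S0] := pselect (exists t, S t); last first.
  left=> t t0 x; rewrite leNgt; apply/negP => h.
  by apply: S0; exists t; split=> //; exists x.
right; have dU := solution_pure2_derivable hU; have dW := solution_pure2_derivable hW.
have [dU1 _] := dU.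
have cU := solution_continuous hU; have cW := solution_continuous hW.
set ts := inf S; have ts0 : 0 <= ts by apply: lb_le_inf; [exists t0 | move=> t []].
have at_ts := le_translate_inf_crossing (fun y => dU1 y d) WU (ex_intro _ t0 St0).
set v := fun x => U (ts *: d + x) - W x.
have vge x : 0 <= v x by rewrite subr_ge0 at_ts.
have cv : continuous v := continuous_translate_sub (c := ts *: d) cU cW.
have dv : pure2_derivable v.
  exact: pure2_derivable_sub (pure2_derivable_translate (ts *: d) dU) dW.
have [L L0 HL] := solutions_lipschitz hf hU hW.
have lapv x : laplacian v x <= L * v x.
  rewrite (laplacian_translate_sub _ x hU hW).
  have := HL (ts *: d + x) x; rewrite (ger0_norm (vge x)).
  have := ler_norm (f (W x) - f (U (ts *: d + x))); rewrite distrC.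
  lra.
have [[xs vxs]|vpos] := pselect (exists x, v x = 0).
  have v0 := strong_min_principle N0 dv cv L0 vge lapv vxs.
  have veq y : U (ts *: d + y) = W y by apply/eqP; rewrite -subr_eq0; apply/eqP; exact: v0.
  exists ts => //; rewrite lt_def ts0 andbT; apply/eqP => ts00; apply: UW.
  by apply: funext => y; rewrite -veq ts00 scale0r add0r.
have vpos' x : W x < U (ts *: d + x).
  by rewrite -subr_gt0 lt_def vge andbT; apply/eqP => vx; apply: vpos; exists x.
have := not_strictly_above_at_inf_crossing N0 hf de0 hde hU hW nd cD (ex_intro _ t0 St0).
by case; exact: vpos'.
Qed.

End SlidingMethod.

Section Signs.
Context {R : realType} {N : nat}.
Notation V := 'rV[R]_N.

Lemma vanishes_along_ray (g : V -> R) (d y : V) (eps : R) :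
  vanishes_at_infinity g -> `|d| = 1 -> 0 < eps ->
  exists2 t, 0 <= t & `|g (t *: d + y)| < eps.
Proof.
move=> vg nd e0; have [M HM] := vanishes_translate y vg e0.
exists (`|M| + 1); first by rewrite addr_ge0.
rewrite addrC; apply: HM; rewrite normrZ nd mulr1 ger0_norm ?addr_ge0 //.
by rewrite (le_lt_trans (ler_norm M)) // ltrDl.
Qed.

Lemma slide_above_signs (U W : V -> R) (d : V) :
  vanishes_at_infinity U -> vanishes_at_infinity W -> `|d| = 1 ->
  (forall t, 0 <= t -> forall x, W x <= U (t *: d + x)) ->
  (forall x, 0 <= U x) /\ (forall x, W x <= 0).
Proof.
move=> vU vW nd above; split=> y; rewrite leNgt; apply/negP => hy.
  have nd' : `|- d| = 1 by rewrite normrN.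
  have hy' : 0 < - U y by rewrite oppr_gt0.
  have [t t0 Ht] := vanishes_along_ray y vW nd' hy'.
  have e : t *: d + (t *: - d + y) = y by rewrite scalerN addrA subrr add0r.
  have := above t t0 (t *: - d + y); rewrite e.
  have := ler_norm (- W (t *: - d + y)).
  by rewrite normrN; lra.
have [t t0 Ht] := vanishes_along_ray y vU nd hy.
by have := above t t0 y; have := ler_norm (U (t *: d + y)); lra.
Qed.

Lemma periodic_slide_signs (U W : V -> R) (d : V) (tau : R) :
  vanishes_at_infinity U -> `|d| = 1 -> 0 < tau ->
  (forall x, W x <= U x) -> (forall x, U (tau *: d + x) = W x) ->
  (forall x, 0 <= U x) /\ (forall x, 0 <= W x).
Proof.
move=> vU nd tau0 WU period.
have iter k x : U ((k%:R * tau) *: d + x) <= U x.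
  elim: k x => [|k IH] x; first by rewrite mul0r scale0r add0r.
  apply: le_trans (IH x).
  have -> : (k.+1%:R * tau) *: d + x = tau *: d + ((k%:R * tau) *: d + x).
    by rewrite -natr1 mulrDl mul1r scalerDl addrA (addrC (_ *: d)).
  by rewrite period WU.
have Upos y : 0 <= U y.
  rewrite leNgt; apply/negP => hy; have hy' : 0 < - U y by rewrite oppr_gt0.
  have [M HM] := vanishes_translate y vU hy'.
  have B0 : 0 <= `|M| / tau by rewrite divr_ge0 // ltW.
  set k := Num.bound (`|M| / tau).
  have Mk : `|M| < k%:R * tau by rewrite -ltr_pdivrMr //; exact: archi_boundP.
  have := HM ((k%:R * tau) *: d); rewrite normrZ nd mulr1 ger0_norm ?mulr_ge0 ?ltW //.
  move=> /(_ (le_lt_trans (ler_norm M) Mk)); rewrite addrC.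
  have := iter k y; have := ler_norm (- U ((k%:R * tau) *: d + y)); rewrite normrN.
  lra.
by split=> // x; rewrite -period.
Qed.

Lemma ordered_solutions_signs (f : R -> R) (de : R) (U W : V -> R) :
  (0 < N)%N -> C1 f -> 0 < de -> (forall s, `|s| < de -> derive1 f s <= 0) ->
  is_solution f U -> is_solution f W -> (forall x, W x <= U x) -> U <> W ->
  (forall x, 0 <= U x) /\ ((forall x, W x <= 0) \/ (forall x, 0 <= W x)).
Proof.
move=> N0 hf de0 hde hU hW WU UW; pose e : 'I_N := Ordinal N0.
have nd := @norm_basis_vec R N e.
have cD : continuous ('D_(basis_vec e) U) := solution_partial_continuous (i := e) hU.
have [_ [_ vU]] := hU; have [_ [_ vW]] := hW.
case: (sliding_alternative N0 hf de0 hde hU hW WU UW nd cD) => [above|[tau tau0 period]].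
  by have [? ?] := slide_above_signs vU vW nd above; split=> //; left.
by have [? ?] := periodic_slide_signs vU nd tau0 WU period; split=> //; right.
Qed.

Lemma ordered_solutions_keep_sign (f : R -> R) (de : R) (U W : V -> R) :
  (0 < N)%N -> C1 f -> 0 < de -> (forall s, `|s| < de -> derive1 f s <= 0) ->
  is_solution f U -> is_solution f W -> (forall x, W x <= U x) -> U <> W ->
  ~ changes_sign U /\ ~ changes_sign W.
Proof.
move=> N0 hf de0 hde hU hW WU UW.
have [Upos [Wneg|Wpos]] := ordered_solutions_signs N0 hf de0 hde hU hW WU UW.
- by split=> -[x [y [hx hy]]]; [move: hy; rewrite ltNge Upos | move: hx; rewrite ltNge Wneg].
- by split=> -[x [y [hx hy]]]; move: hy; rewrite ltNge ?Upos ?Wpos.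
Qed.

End Signs.

Theorem corollary1p1 (R : realType) (N : nat) (hN : (1 <= N)%N)
  (f : R -> R) (hf : C1 f) (hf0 : f 0 = 0)
  (hdelta : exists2 delta : R, 0 < delta &
     forall s : R, `|s| < delta -> derive1 f s <= 0)
  (u1 u2 : 'rV[R]_N -> R)
  (hu1 : is_solution f u1) (hu2 : is_solution f u2)
  (hdist : u1 <> u2)
  (hnz1 : exists x, u1 x <> 0) (hnz2 : exists x, u2 x <> 0)
  (hsign : changes_sign u1 \/ changes_sign u2) :
  exists x y : 'rV[R]_N, u1 x - u2 x > 0 /\ u1 y - u2 y < 0.
Proof.
have [de de0 hde] := hdelta.
have [[x hx]|nx] := pselect (exists x, u1 x - u2 x > 0); last first.
  have u12 x : u1 x <= u2 x by rewrite -subr_le0 leNgt; apply/negP => h; apply: nx; exists x.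
  have [n2 n1] := ordered_solutions_keep_sign hN hf de0 hde hu2 hu1 u12 (nesym hdist).
  by case: hsign.
have [[y hy]|ny] := pselect (exists y, u1 y - u2 y < 0); first by exists x, y.
have u21 y : u2 y <= u1 y by rewrite -subr_ge0 leNgt; apply/negP => h; apply: ny; exists y.
have [n1 n2] := ordered_solutions_keep_sign hN hf de0 hde hu1 hu2 u21 hdist.
by case: hsign.
Qed.
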